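(* Normalize $\operatorname{var}(X)=1$ and $\operatorname{var}(W_1)=I_{d_1}$, and suppose $\operatorname{var}(Y,X,W_1)$ is positive definite. Then $b\in\mathcal B(r_X,r_Y,c)$ if and only if there exists $(p_1,g_1)\in\mathbb R^{d_1}\times\mathbb R^{d_1}$ with $(p_1'r_X)(g_1'r_Y)(1-\|c\|^2)=k_1-bk_0$; $(I+cr_Y')g_1=\sigma_{W_1,Y}-b\sigma_{W_1,X}$; $(I+cr_X')p_1=\sigma_{W_1,X}$; $(g_1'r_Y)^2(1-\|c\|^2)<k_0(\beta_{\text{med}}-b)^2+\operatorname{var}(Y^{\perp X,W_1})$; $(p_1'r_X)^2(1-\|c\|^2)<k_0$; $\|c\|^2<1$.
   Context: For random vectors $A,B$ with $\operatorname{var}(B)$ invertible, $A^{\perp B}=A-\operatorname{cov}(A,B)\operatorname{var}(B)^{-1}B$. $\sigma_{A,B}=\operatorname{cov}(A,B)$ (column vectors when $A=W_1$). $\beta_{\text{med}}$ is the coefficient on $X$ in the linear projection of $Y$ on $(1,X,W_1)$. $k_0=\operatorname{var}(X^{\perp W_1})$, $k_1=\operatorname{cov}(Y^{\perp W_1},X^{\perp W_1})$. For $r_X,r_Y,c\in\mathbb R^{d_1}$, $\mathcal B(r_X,r_Y,c)$ is the set of $b\in\mathbb R$ such that for some $(p_1,g_1)\in\mathbb R^{d_1}\times\mathbb R^{d_1}$ (with $\Sigma_{\text{obs}}=\operatorname{var}(W_1)$): $\operatorname{cov}(Y,X)=b\operatorname{var}(X)+g_1'(\Sigma_{\text{obs}}+cr_X'+r_Yc'+r_Yr_X')p_1$;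 $\operatorname{cov}(Y,W_1)=b\operatorname{cov}(X,W_1)+g_1'(\Sigma_{\text{obs}}+r_Yc')$; $\operatorname{cov}(X,W_1)=p_1'(\Sigma_{\text{obs}}+r_Xc')$; $\operatorname{var}(Y)>b^2\operatorname{var}(X)+g_1'(\Sigma_{\text{obs}}+r_Yr_Y'+2r_Yc')g_1+2bg_1'(\Sigma_{\text{obs}}+cr_X'+r_Yc'+r_Yr_X')p_1$; $\operatorname{var}(X)>p_1'(\Sigma_{\text{obs}}+2r_Xc'+r_Xr_X')p_1$; $1>c'\Sigma_{\text{obs}}^{-1}c$. *)

From HB Require Import structures.
From mathcomp Require Import all_boot all_order all_algebra.
Set Implicit Arguments. Unset Strict Implicit. Unset Printing Implicit Defensive.
Import Order.TTheory GRing.Theory Num.Theory.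
Local Open Scope ring_scope.

(* Second moments of (Y, X, W1):
   sYY = var Y, sYX = cov(Y,X), sXX = var X,
   sYW = cov(W1,Y) = sigma_{W1,Y} (column), sXW = cov(W1,X) = sigma_{W1,X} (column),
   SW = var W1 = Sigma_obs. *)

Section Defs.
Variables (R : realFieldType) (d1 : nat).
Variables (sYY sYX sXX : R) (sYW sXW : 'cV[R]_d1) (SW : 'M[R]_d1).

Definition sc (M : 'M[R]_1) : R := M ord0 ord0.

Definition varXW : 'M[R]_(1 + d1) :=
  block_mx (sXX%:M) (sXW^T) sXW SW.
Definition covXW_Y : 'cV[R]_(1 + d1) := col_mx (sYX%:M) sYW.

Definition varYXW : 'M[R]_(1 + (1 + d1)) :=
  block_mx (sYY%:M) (covXW_Y^T) covXW_Y varXW.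

Definition posdef (n : nat) (S : 'M[R]_n) : Prop :=
  forall v : 'cV[R]_n, v != 0 -> 0 < sc (v^T *m S *m v).

(* k0 = var(X^{perp W1}), k1 = cov(Y^{perp W1}, X^{perp W1}) *)
Definition k0 : R := sXX - sc (sXW^T *m invmx SW *m sXW).
Definition k1 : R := sYX - sc (sYW^T *m invmx SW *m sXW).

(* beta_med: coefficient on X in the linear projection of Y on (1, X, W1) *)
Definition beta_med : R :=
  (invmx varXW *m covXW_Y) (lshift d1 ord0) ord0.

Definition varY_perp_XW : R :=
  sYY - sc (covXW_Y^T *m invmx varXW *m covXW_Y).

Definition Bset (rX rY c : 'cV[R]_d1) (b : R) : Prop :=
  exists (p1 g1 : 'cV[R]_d1),
    (sYX = b * sXX + sc (g1^T *m (SW + c *m rX^T + rY *m c^T + rY *m rX^T) *m p1)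
     /\ sYW^T = b *: sXW^T + g1^T *m (SW + rY *m c^T)
     /\ sXW^T = p1^T *m (SW + rX *m c^T)
     /\ sYY > b ^+ 2 * sXX
              + sc (g1^T *m (SW + rY *m rY^T + 2%:R *: (rY *m c^T)) *m g1)
              + 2%:R * b * sc (g1^T *m (SW + c *m rX^T + rY *m c^T + rY *m rX^T) *m p1)
     /\ sXX > sc (p1^T *m (SW + 2%:R *: (rX *m c^T) + rX *m rX^T) *m p1)
     /\ 1 > sc (c^T *m invmx SW *m c)).

End Defs.

From HB Require Import structures.
From mathcomp Require Import all_boot all_order all_algebra.
From mathcomp Require Import ring lra.
Import Order.TTheory GRing.Theory Num.Theory.
Set Implicit Arguments. Unset Strict Implicit.
Local Open Scope ring_scope.

(* With var(W1) = I, the linear equations of B say exactly that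
   sigma_{W1,X} = p1 + (r_X'p1) c  and  sigma_{W1,Y} - b sigma_{W1,X} = g1 + (r_Y'g1) c.
   Substituting these, each remaining condition of B differs from its counterpart
   by an explicit polynomial identity in p1, g1, c, r_X, r_Y: the equation for
   cov(Y,X) has the same slack as the one for k1 - b k0, the bound on var(X) the same
   slack as the bound on k0, and the bound on var(Y) the same slack as the bound on
   k0 (beta_med - b)^2 + var(Y^{perp X,W1}) once the cov(Y,X) equation holds.  The
   partialled-out moments are computed from the block inverse of var(X, W1), which
   gives beta_med = k1 / k0 and var(Y^{perp X,W1}) = var(Y) - |sigma_{W1,Y}|^2 - k1^2 / k0. *)

Section ScalarMatrices.
Variable R : realFieldType.
Implicit Types M N : 'M[R]_1.

Lemma scD M N : sc (M + N) = sc M + sc N.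
Proof. by rewrite /sc mxE. Qed.

Lemma scZ (k : R) M : sc (k *: M) = k * sc M.
Proof. by rewrite /sc mxE. Qed.

Lemma scM M N : sc (M *m N) = sc M * sc N.
Proof. by rewrite /sc mxE big_ord1. Qed.

Lemma sc_tr M : sc M^T = sc M.
Proof. by rewrite /sc mxE. Qed.

Lemma scN M : sc (- M) = - sc M.
Proof. by rewrite /sc mxE. Qed.

Lemma sc_scalar (k : R) : sc (k%:M : 'M[R]_1) = k.
Proof. by rewrite /sc mxE mulr1n. Qed.

Lemma sc_inj : injective (@sc R).
Proof. by move=> M N eqMN; apply/matrixP=> i j; rewrite !ord1. Qed.

End ScalarMatrices.

Section Dot.
Variables (R : realFieldType) (d1 : nat).
Implicit Types (u v w z : 'cV[R]_d1) (A B : 'M[R]_d1).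

Definition dot u v : R := sc (u^T *m v).

Lemma dotC u v : dot u v = dot v u.
Proof. by rewrite /dot -sc_tr trmx_mul trmxK. Qed.

Lemma dotDl u v w : dot (u + v) w = dot u w + dot v w.
Proof. by rewrite /dot linearD /= mulmxDl scD. Qed.

Lemma dotDr u v w : dot w (u + v) = dot w u + dot w v.
Proof. by rewrite /dot mulmxDr scD. Qed.

Lemma dotZl k u v : dot (k *: u) v = k * dot u v.
Proof. by rewrite /dot linearZ /= -scalemxAl scZ. Qed.

Lemma dotZr k u v : dot u (k *: v) = k * dot u v.
Proof. by rewrite /dot -scalemxAr scZ. Qed.

Lemma dotBr u v w : dot w (u - v) = dot w u - dot w v.
Proof. by rewrite dotDr -scaleN1r dotZr mulN1r. Qed.

Lemma formD u z A B :
  sc (u^T *m (A + B) *m z) = sc (u^T *m A *m z) + sc (u^T *m B *m z).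
Proof. by rewrite mulmxDr mulmxDl scD. Qed.

Lemma formZ k u z A : sc (u^T *m (k *: A) *m z) = k * sc (u^T *m A *m z).
Proof. by rewrite -scalemxAr -scalemxAl scZ. Qed.

Lemma form1 u z : sc (u^T *m 1%:M *m z) = dot u z.
Proof. by rewrite mulmx1. Qed.

Lemma form_outer u v w z : sc (u^T *m (v *m w^T) *m z) = dot u v * dot w z.
Proof. by rewrite mulmxA -mulmxA scM. Qed.

Lemma mulmx_cV11 v (M : 'M[R]_1) : v *m M = sc M *: v.
Proof. by rewrite {1}[M]mx11_scalar mul_mx_scalar. Qed.

Lemma mulmx_rV11 (r : 'rV[R]_d1) (M : 'M[R]_1) : M *m r = sc M *: r.
Proof. by rewrite {1}[M]mx11_scalar mul_scalar_mx. Qed.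

Lemma mul_rank1_update v w z : (1%:M + v *m w^T) *m z = z + dot w z *: v.
Proof. by rewrite mulmxDl mul1mx -mulmxA mulmx_cV11. Qed.

Lemma tr_rank1_updateE v w z (M : 'cV[R]_d1) :
  (M^T = z^T *m (1%:M + w *m v^T)) <-> ((1%:M + v *m w^T) *m z = M).
Proof.
by split=> [/(congr1 trmx) | <-]; rewrite trmx_mul linearD /= trmx1 trmx_mul !trmxK.
Qed.

Lemma tr_rank1_update_shiftE a v w x y z :
  (y^T = a *: x^T + z^T *m (1%:M + w *m v^T))
  <-> ((1%:M + v *m w^T) *m z = y - a *: x).
Proof.
rewrite -tr_rank1_updateE linearB linearZ /=.
by split=> [-> | <-]; rewrite addrC ?addKr ?subrK.
Qed.

End Dot.

Section Regression.
Variables (R : realFieldType) (d1 : nat).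
Variables (sYY sYX sXX : R) (sYW sXW : 'cV[R]_d1).

Local Notation kXX := (k0 sXX sXW 1%:M).
Local Notation kYX := (k1 sYX sYW sXW 1%:M).

Lemma k0_id_cov : kXX = sXX - dot sXW sXW.
Proof. by rewrite /k0 invmx1 mulmx1. Qed.

Lemma k1_id_cov : kYX = sYX - dot sYW sXW.
Proof. by rewrite /k1 invmx1 mulmx1. Qed.

Hypothesis kXX_neq0 : kXX != 0.

Lemma varXW_unit : varXW sXX sXW 1%:M \in unitmx.
Proof.
have k_neq0 : sXX - dot sXW sXW != 0 by rewrite -k0_id_cov.
pose k := (sXX - dot sXW sXW)^-1.
(* Block inverse of [[sXX, sXW^T], [sXW, I]] through the Schur complement k0. *)
pose V' := block_mx (k%:M : 'M[R]_1) (- k *: sXW^T)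
                    (- k *: sXW) (1%:M + k *: (sXW *m sXW^T)).
suff /mulmx1_unit[] : varXW sXX sXW 1%:M *m V' = 1%:M by [].
rewrite /varXW mulmx_block scalar_mx_block !mul1mx -!scalemxAr !mulmx_cV11.
rewrite mulmxDr mulmx1 -scalemxAr mulmxA [sXW^T *m sXW]mx11_scalar.
rewrite !mulmx_rV11 !sc_scalar -[(sXW^T *m sXW) _ _]/(dot sXW sXW) /k.
congr block_mx; apply/matrixP=> i j; rewrite !mxE.
- by rewrite !ord1 /= !mulr1n; field.
- by field.
- by ring.
- by ring.
Qed.

Let beta := kYX / kXX.

Lemma varXW_mul_regression_coef :
  varXW sXX sXW 1%:M *m col_mx (beta%:M) (sYW - beta *: sXW) = covXW_Y sYX sYW.
Proof.
rewrite /varXW /covXW_Y mul_block_col !mul1mx mul_scalar_mx mulmx_cV11 sc_scalar.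
congr col_mx; last by rewrite addrC subrK.
apply: sc_inj; rewrite mulmxBr -scalemxAr !scD scN !scZ !sc_scalar.
rewrite -/(dot sXW sYW) -/(dot sXW sXW).
move: kXX_neq0; rewrite /beta k0_id_cov k1_id_cov (dotC sYW) => k_neq0.
by field.
Qed.

Lemma regression_coef :
  invmx (varXW sXX sXW 1%:M) *m covXW_Y sYX sYW
  = col_mx (beta%:M) (sYW - beta *: sXW).
Proof. by rewrite -varXW_mul_regression_coef mulKmx // varXW_unit. Qed.

Lemma beta_med_id_cov : beta_med sYX sXX sYW sXW 1%:M = kYX / kXX.
Proof. by rewrite /beta_med regression_coef col_mxEu mxE mulr1n. Qed.

Lemma varY_perp_XW_id_cov :
  varY_perp_XW sYY sYX sXX sYW sXW 1%:M = sYY - dot sYW sYW - kYX ^+ 2 / kXX.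
Proof.
rewrite /varY_perp_XW -mulmxA regression_coef /covXW_Y tr_col_mx mul_row_col.
rewrite scD tr_scalar_mx mul_scalar_mx scZ sc_scalar -/(dot _ _) -/(dot _ _).
rewrite dotBr dotZr /beta k1_id_cov.
by field.
Qed.

Lemma k0_beta_med_varY_perp b :
  kXX * (beta_med sYX sXX sYW sXW 1%:M - b) ^+ 2
    + varY_perp_XW sYY sYX sXX sYW sXW 1%:M
  = sYY - dot sYW sYW - 2 * b * kYX + b ^+ 2 * kXX.
Proof. by rewrite beta_med_id_cov varY_perp_XW_id_cov; field. Qed.

End Regression.

Section MomentConditions.
Variables (R : realFieldType) (d1 : nat).
Variables (sYY sYX sXX b : R) (sYW sXW p g rX rY c : 'cV[R]_d1).
Hypothesis hX : (1%:M + c *m rX^T) *m p = sXW.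
Hypothesis hY : (1%:M + c *m rY^T) *m g = sYW - b *: sXW.

Local Notation kXX := (k0 sXX sXW 1%:M).
Local Notation kYX := (k1 sYX sYW sXW 1%:M).
Local Notation MXX := (1%:M + 2%:R *: (rX *m c^T) + rX *m rX^T).
Local Notation MYX := (1%:M + c *m rX^T + rY *m c^T + rY *m rX^T).
Local Notation MYY := (1%:M + rY *m rY^T + 2%:R *: (rY *m c^T)).

Lemma sXW_param : sXW = p + dot rX p *: c.
Proof. by rewrite -hX mul_rank1_update. Qed.

Lemma sYW_param : sYW = b *: sXW + (g + dot rY g *: c).
Proof. by rewrite -mul_rank1_update hY addrC subrK. Qed.

Lemma k0_slack :
  kXX - dot p rX ^+ 2 * (1 - dot c c) = sXX - sc (p^T *m MXX *m p).
Proof.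
rewrite k0_id_cov sXW_param !formD formZ form1 !form_outer.
rewrite !(dotDl, dotDr, dotZl, dotZr) (dotC rX p) (dotC c p).
by ring.
Qed.

Lemma k1_slack :
  kYX - b * kXX - dot p rX * dot g rY * (1 - dot c c)
  = sYX - (b * sXX + sc (g^T *m MYX *m p)).
Proof.
rewrite k0_id_cov k1_id_cov sYW_param sXW_param !formD form1 !form_outer.
rewrite !(dotDl, dotDr, dotZl, dotZr) (dotC rX p) (dotC rY g) (dotC c p) ?(dotC c g).
by ring.
Qed.

Lemma k0_beta_med_varY_perp_slack :
  sYY - dot sYW sYW - 2 * b * kYX + b ^+ 2 * kXX - dot g rY ^+ 2 * (1 - dot c c)
  = sYY - (b ^+ 2 * sXX + sc (g^T *m MYY *m g) + 2 * b * sc (g^T *m MYX *m p))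
    - 2 * b * (sYX - (b * sXX + sc (g^T *m MYX *m p))).
Proof.
rewrite k0_id_cov k1_id_cov sYW_param sXW_param !formD formZ form1 !form_outer.
rewrite !(dotDl, dotDr, dotZl, dotZr) (dotC rX p) (dotC rY g) ?(dotC c p) ?(dotC c g) ?(dotC p g).
by ring.
Qed.

Hypothesis c_lt1 : dot c c < 1.

Lemma moment_conditions_iff :
  [/\ sYX = b * sXX + sc (g^T *m MYX *m p),
      sYY > b ^+ 2 * sXX + sc (g^T *m MYY *m g) + 2%:R * b * sc (g^T *m MYX *m p)
    & sXX > sc (p^T *m MXX *m p)]
  <->
  [/\ dot p rX * dot g rY * (1 - dot c c) = kYX - b * kXX,
      dot g rY ^+ 2 * (1 - dot c c)
        < kXX * (beta_med sYX sXX sYW sXW 1%:M - b) ^+ 2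
          + varY_perp_XW sYY sYX sXX sYW sXW 1%:M
    & dot p rX ^+ 2 * (1 - dot c c) < kXX].
Proof.
have eXX := k0_slack; have eYX := k1_slack; have eYY := k0_beta_med_varY_perp_slack.
have slack_ge0 : 0 <= dot p rX ^+ 2 * (1 - dot c c).
  by rewrite mulr_ge0 ?sqr_ge0 // subr_ge0 ltW.
split=> -[eq1 ltY ltX].
- have e1 : kYX - b * kXX - dot p rX * dot g rY * (1 - dot c c) = 0.
    by rewrite eYX eq1 subrr.
  rewrite -eYX e1 mulr0 subr0 in eYY.
  have kXX_neq0 : kXX != 0 by rewrite gt_eqF //; lra.
  by rewrite k0_beta_med_varY_perp //; split; lra.
- have e1 : kYX - b * kXX - dot p rX * dot g rY * (1 - dot c c) = 0.
    by rewrite eq1 subrr.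
  rewrite -eYX e1 mulr0 subr0 in eYY.
  have kXX_neq0 : kXX != 0 by rewrite gt_eqF //; lra.
  by rewrite k0_beta_med_varY_perp // in ltY; split; lra.
Qed.

End MomentConditions.

Theorem mainTheorem18 (R : realFieldType) (d1 : nat)
  (sYY sYX sXX : R) (sYW sXW : 'cV[R]_d1) (SW : 'M[R]_d1)
  (rX rY c : 'cV[R]_d1) (b : R) :
  sXX = 1 -> SW = 1%:M ->
  posdef (varYXW sYY sYX sXX sYW sXW SW) ->
  (Bset sYY sYX sXX sYW sXW SW rX rY c b <->
   exists (p1 g1 : 'cV[R]_d1),
     (sc (p1^T *m rX) * sc (g1^T *m rY) * (1 - sc (c^T *m c))
           = k1 sYX sYW sXW SW - b * k0 sXX sXW SW
      /\ (1%:M + c *m rY^T) *m g1 = sYW - b *: sXW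
      /\ (1%:M + c *m rX^T) *m p1 = sXW
      /\ sc (g1^T *m rY) ^+ 2 * (1 - sc (c^T *m c))
           < k0 sXX sXW SW * (beta_med sYX sXX sYW sXW SW - b) ^+ 2
             + varY_perp_XW sYY sYX sXX sYW sXW SW
      /\ sc (p1^T *m rX) ^+ 2 * (1 - sc (c^T *m c)) < k0 sXX sXW SW
      /\ sc (c^T *m c) < 1)).
Proof.
move=> -> -> _; rewrite /Bset invmx1 mulmx1.
split=> -[p [g]].
- case=> eqYX [/tr_rank1_update_shiftE hY [/tr_rank1_updateE hX [ltY [ltX c_lt1]]]].
  have [eq1 lt4 lt5] :=
    (moment_conditions_iff sYY sYX 1 hX hY c_lt1).1 (And3 eqYX ltY ltX).
  by exists p, g.
- case=> eq1 [hY [hX [lt4 [lt5 c_lt1]]]].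
  have [eqYX ltY ltX] :=
    (moment_conditions_iff sYY sYX 1 hX hY c_lt1).2 (And3 eq1 lt4 lt5).
  move/tr_rank1_update_shiftE: hY => hY; move/tr_rank1_updateE: hX => hX.
  by exists p, g.
Qed.
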